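(* Fix $q_{\min}>0$ and let $\phi_t(n):=P^{\mathbb N_0}_t1_{\mathbb N_+}(n)$ for $n\in\mathbb N_0$, $t\ge 0$. Then: (a) for all $r\in\mathbb N_+$ and $t>0$, $\partial_t\phi_t(r)=2q_{\min}\big(\phi_t(r+1)+\phi_t(r-1)-2\phi_t(r)\big)\le 0$; (b) $\phi_t(y)\ge\phi_t(x)$ whenever $y\ge x$; (c) for all $r\in\mathbb N_+$ and $t>0$, $\phi_t(r)\le \dfrac{r}{2\sqrt{t\,q_{\min}}}$.
   Context: $\mathbb N_0=\{0,1,2,\dots\}$, $\mathbb N_+=\{1,2,\dots\}$. $G_{\mathbb N_0}=(\mathbb N_0,q_0)$ is the graph with $q_0(x,y)=2q_{\min}$ if $|x-y|=1$ and $x>0$, and $q_0(x,y)=0$ otherwise (a birth–death chain absorbed at $0$), with Laplacian $\Delta f(x)=\sum_y q_0(x,y)(f(y)-f(x))$. Its heat semigroup $P^{\mathbb N_0}_t$ on bounded functions is defined as follows: for finite $S$ let $q_S(x,y)=q_0(x,y)1_S(x)$ with Laplacian $\Delta_S$ and $P^S_tf=\sum_{k\ge0}t^k\Delta_S^k(f1_S)/k!$; then $P_tf=\lim_i P^{S_i}_tf$ pointwise along any increasing exhaustion of $\mathbb N_0$ by finite sets. *)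

From Stdlib Require Import Reals Lra Lia Arith ClassicalEpsilon.
Open Scope R_scope.

(* Limit of a real sequence (value chosen by epsilon; equals the unique limit
   whenever the sequence converges). *)
Definition Lim (u : nat -> R) : R :=
  epsilon (inhabits 0) (fun l => Un_cv u l).

Definition q0 (qmin : R) (x y : nat) : R :=
  if andb (0 <? x)%nat (orb (y =? S x)%nat (S y =? x)%nat) then 2 * qmin else 0.

Definition inS (N x : nat) : bool := (x <=? N)%nat.

(* Laplacian of q_S(x,y) = q0(x,y) 1_S(x):
   Delta_S g x = 1_S(x) * sum_y q0(x,y) (g y - g x);
   q0 x y = 0 for y > x+1, so the sum over y is the finite sum over y <= x+1. *)
Definition LapS (qmin : R) (N : nat) (g : nat -> R) (x : nat) : R :=
  if inS N x then sum_f_R0 (fun y => q0 qmin x y * (g y - g x)) (S x) else 0.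

Definition restrict (N : nat) (f : nat -> R) (x : nat) : R :=
  if inS N x then f x else 0.

Definition PS (qmin : R) (N : nat) (t : R) (f : nat -> R) (x : nat) : R :=
  Lim (fun n => sum_f_R0
         (fun k => t ^ k / INR (fact k) * Nat.iter k (LapS qmin N) (restrict N f) x) n).

(* Heat semigroup: pointwise limit along the exhaustion S_0 ⊂ S_1 ⊂ ... *)
Definition Pt (qmin : R) (t : R) (f : nat -> R) (x : nat) : R :=
  Lim (fun N => PS qmin N t f x).

Definition phi (qmin : R) (t : R) (n : nat) : R :=
  Pt qmin t (fun m => if (0 <? m)%nat then 1 else 0) n.

(* All semigroups here are nearest-neighbour operators L on
   functions N_0 -> R with bounded rates, and e^{tL} g (x) is the entire
   power series sum_k t^k/k! (L^k g)(x).  We first develop this calculus: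
   convergence, the heat equation d/dt e^{tL} = L e^{tL}, positivity
   (e^{tL} = e^{-Bt} e^{t(L+B)} with L+B having nonnegative coefficients) and
   intertwining (if L2 (a h + b h(.+1)) = a L1 h + b (L1 h)(.+1) then the same
   holds for the semigroups).

   Intertwining identifies the discrete derivatives of phi_t with semigroups
   of auxiliary walks: grad_t(r) = phi_t(r+1) - phi_t(r) >= 0 is the kernel of
   the walk reflected at 0 (giving (b)), and grad_t(r+1) - grad_t(r) = -curv_t(r)
   <= 0 (giving (a) and phi_t(r) <= r grad_t(0)).  For (c) we show
   grad_t(0) <= 1/(2 sqrt(tq)): sqrt t * grad_t(0) is nondecreasing (via the
   folded walk |Z_t| and a Bessel-type recurrence), while the mass
   sum_{i<=n} (1 - phi_t(i+1)) has derivative 2q (grad_t(0) - grad_t(n+1)) and is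
   at most sqrt(4qt) by a second-moment estimate; comparing the two and letting
   first n, then the time horizon, tend to infinity gives the bound. *)

From Pilot Require Import Defs.
From Stdlib Require Import Reals Lra Lia Arith ClassicalEpsilon.
From Coquelicot Require Import Coquelicot.
Open Scope R_scope.

(* Coquelicot states equalities of derivatives and series in the carrier of a
   normed module; this retypes such a goal as an equation in R. *)
Ltac real_eq := match goal with |- ?a = ?b => change (@eq R a b) end.

Lemma is_derive_eq (f : R -> R) (x l l' : R) : is_derive f x l -> l = l' -> is_derive f x l'.
Proof. intros H <-. exact H. Qed.

Lemma fact_pos (k : nat) : 0 < INR (fact k).
Proof. apply lt_0_INR, lt_O_fact. Qed.

Lemma fact_neq0 (k : nat) : INR (fact k) <> 0.
Proof. apply Rgt_not_eq, fact_pos. Qed.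

(** * Exponential series with geometrically bounded coefficients *)

Definition exp_term (y : R) (k : nat) : R := y ^ k / INR (fact k).

Lemma exp_term_nonneg (y : R) (k : nat) : 0 <= y -> 0 <= exp_term y k.
Proof.
  intro Hy. unfold exp_term, Rdiv.
  apply Rmult_le_pos; [apply pow_le; exact Hy | left; apply Rinv_0_lt_compat, fact_pos].
Qed.

Lemma exp_term_summable (y : R) : ex_series (exp_term y).
Proof.
  exists (exp y). eapply is_series_ext; [| exact (is_exp_Reals y)].
  intro n. unfold exp_term. rewrite pow_n_pow. reflexivity.
Qed.

(* Coefficient sequences with |c k| <= M K^k: the class for which the
   exponential series sum_k t^k/k! c_k is an entire function of t. *)
Definition geom_bounded (c : nat -> R) (M K : R) : Prop :=
  forall k, Rabs (c k) <= M * K ^ k.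

Definition expser (c : nat -> R) (t : R) : R :=
  PSeries (fun k => c k / INR (fact k)) t.

Section ExpSeries.

Variables (M K : R).

Lemma expser_radius (c : nat -> R) (t : R) :
  geom_bounded c M K -> Rbar_lt (Rabs t) (CV_radius (fun k => c k / INR (fact k))).
Proof.
  intro Hc. apply Rbar_lt_le_trans with (Rabs t + 1); [simpl; lra |].
  apply (proj1 (Lub_Rbar_correct _)). unfold CV_disk.
  set (r := Rabs t + 1). assert (Hr : 0 <= r) by (pose proof (Rabs_pos t); unfold r; lra).
  apply (@ex_series_le R_AbsRing R_CompleteNormedModule)
    with (b := fun n => M * exp_term (K * r) n).
  - intro n. change (norm ?x) with (Rabs x). rewrite Rabs_Rabsolu.
    unfold exp_term, Rdiv. rewrite !Rabs_mult, Rpow_mult_distr.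
    rewrite (Rabs_right (r ^ n)) by (apply Rle_ge, pow_le; exact Hr).
    rewrite (Rabs_right (/ INR (fact n))) by (left; apply Rinv_0_lt_compat, fact_pos).
    pose proof (Hc n). pose proof (pow_le r n Hr).
    pose proof (Rinv_0_lt_compat _ (fact_pos n)).
    replace (M * (K ^ n * r ^ n * / INR (fact n)))
      with (M * K ^ n * / INR (fact n) * r ^ n) by ring.
    apply Rmult_le_compat_r; [lra |]. apply Rmult_le_compat_r; lra.
  - apply (ex_series_scal_l M (exp_term (K * r))), exp_term_summable.
Qed.

Lemma expser_is_series (c : nat -> R) (t : R) :
  geom_bounded c M K -> is_series (fun k => t ^ k / INR (fact k) * c k) (expser c t).
Proof.
  intro Hc. unfold expser.
  eapply is_series_ext; [| apply PSeries_correct, CV_radius_inside, (expser_radius c t Hc)].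
  intro n. simpl. rewrite pow_n_pow. change (scal ?a ?b) with (a * b).
  field. apply fact_neq0.
Qed.

Lemma expser_derive (c : nat -> R) (t : R) :
  geom_bounded c M K -> is_derive (expser c) t (expser (fun k => c (S k)) t).
Proof.
  intro Hc. unfold expser.
  replace (PSeries (fun k => c (S k) / INR (fact k)) t)
    with (PSeries (PS_derive (fun k => c k / INR (fact k))) t).
  - apply is_derive_PSeries, (expser_radius c t Hc).
  - apply PSeries_ext. intro n. unfold PS_derive. rewrite fact_simpl, mult_INR.
    field. split; [apply fact_neq0 | apply not_0_INR; lia].
Qed.

Lemma expser_shift (c : nat -> R) (t : R) :
  geom_bounded c M K -> expser c t = c 0%nat + t * expser (fun k => c (S k) / INR (S k)) t.
Proof.
  intro Hc. unfold expser.
  rewrite PSeries_decr_1 by (apply CV_radius_inside, (expser_radius c t Hc)).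
  change (INR (fact 0)) with 1. rewrite Rdiv_1_r. do 2 f_equal.
  apply PSeries_ext. intro n. unfold PS_decr_1.
  rewrite fact_simpl, mult_INR. field. split; [apply not_0_INR; lia | apply fact_neq0].
Qed.

Lemma expser_nonneg (c : nat -> R) (t : R) :
  geom_bounded c M K -> 0 <= t -> (forall k, 0 <= c k) -> 0 <= expser c t.
Proof.
  intros Hc Ht Hpos.   rewrite <- (is_series_unique _ _ (expser_is_series c t Hc)).
  replace 0 with (0 * Series (exp_term 0)) at 1 by ring. rewrite <- Series_scal_l.
  apply Series_le; [| eexists; apply expser_is_series; exact Hc].
  intro n. rewrite Rmult_0_l. split; [lra |].
  apply Rmult_le_pos; [apply exp_term_nonneg |]; auto.
Qed.

End ExpSeries.

Lemma expser_ext (c1 c2 : nat -> R) (t : R) :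
  (forall k, c1 k = c2 k) -> expser c1 t = expser c2 t.
Proof. intro H. unfold expser. apply PSeries_ext. intro n. rewrite H. reflexivity. Qed.

Lemma expser_zero (c : nat -> R) (t : R) : (forall k, c k = 0) -> expser c t = 0.
Proof.
  intro H. rewrite (expser_ext c (fun _ => 0)) by exact H. unfold expser.
  rewrite (PSeries_ext _ (fun _ => 0)); [apply PSeries_const_0 |].
  intro n. unfold Rdiv. ring.
Qed.

Lemma expser_at_0 (c : nat -> R) : expser c 0 = c 0%nat.
Proof. unfold expser. rewrite PSeries_0. simpl. field. Qed.

Lemma expser_lin (c1 c2 : nat -> R) (a b M1 K1 M2 K2 t : R) :
  geom_bounded c1 M1 K1 -> geom_bounded c2 M2 K2 ->
  expser (fun k => a * c1 k + b * c2 k) t = a * expser c1 t + b * expser c2 t.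
Proof.
  intros H1 H2. unfold expser.
  rewrite <- (PSeries_scal a), <- (PSeries_scal b), <- PSeries_plus.
  - apply PSeries_ext. intro n. unfold PS_plus, PS_scal.
    change (plus (scal a ?x) (scal b ?y)) with (a * x + b * y). field. apply fact_neq0.
  - apply ex_pseries_scal; [apply Rmult_comm |].
    apply CV_radius_inside, (expser_radius M1 K1 c1 t H1).
  - apply ex_pseries_scal; [apply Rmult_comm |].
    apply CV_radius_inside, (expser_radius M2 K2 c2 t H2).
Qed.

(** Tails of the exponential series, used to bound a function whose first
    Taylor coefficients vanish. *)

Definition exp_tail_term (m : nat) (y : R) (k : nat) : R :=
  if (k <=? m)%nat then 0 else exp_term y k.

Definition exp_tail (m : nat) (y : R) : R := Series (exp_tail_term m y).

Lemma exp_tail_term_bounds (m : nat) (y : R) (k : nat) :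
  0 <= y -> 0 <= exp_tail_term m y k <= exp_term y k.
Proof.
  intro Hy. pose proof (exp_term_nonneg y k Hy).
  unfold exp_tail_term. destruct (k <=? m)%nat; lra.
Qed.

Lemma exp_tail_summable (m : nat) (y : R) : 0 <= y -> ex_series (exp_tail_term m y).
Proof.
  intro Hy. apply (@ex_series_le R_AbsRing R_CompleteNormedModule) with (b := exp_term y).
  - intro n. change (norm ?x) with (Rabs x). destruct (exp_tail_term_bounds m y n Hy).
    rewrite Rabs_right; lra.
  - apply exp_term_summable.
Qed.

Lemma exp_tail_mono (m : nat) (y1 y2 : R) : 0 <= y1 <= y2 -> exp_tail m y1 <= exp_tail m y2.
Proof.
  intros Hy. unfold exp_tail. apply Series_le; [| apply exp_tail_summable; lra].
  intro n. split; [apply exp_tail_term_bounds; lra |]. unfold exp_tail_term.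
  destruct (n <=? m)%nat; [lra |]. unfold exp_term, Rdiv.
  apply Rmult_le_compat_r; [left; apply Rinv_0_lt_compat, fact_pos | apply pow_incr; lra].
Qed.

Lemma exp_tail_eq (m : nat) (y : R) :
  0 <= y -> exp_tail m y = Series (exp_term y) - sum_f_R0 (exp_term y) m.
Proof.
  intro Hy. unfold exp_tail.
  rewrite (Series_incr_n (exp_tail_term m y) (S m)) by (lia || apply exp_tail_summable; exact Hy).
  rewrite (Series_incr_n (exp_term y) (S m)) by (lia || apply exp_term_summable).
  simpl pred.
  rewrite (sum_eq _ (fun _ => 0)), sum_cte, Rmult_0_l.
  - rewrite (Series_ext _ (fun k => exp_term y (S m + k))); [ring |].
    intro n. unfold exp_tail_term. replace (S m + n <=? m)%nat with false; [reflexivity |].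
    symmetry. apply Nat.leb_nle. lia.
  - intros i Hi. unfold exp_tail_term. replace (i <=? m)%nat with true; [reflexivity |].
    symmetry. apply Nat.leb_le. exact Hi.
Qed.

Lemma exp_tail_vanishes (y : R) : 0 <= y -> Un_cv (fun m => exp_tail m y) 0.
Proof.
  intros Hy eps Heps.
  pose proof (Series_correct _ (exp_term_summable y)) as Hexp.
  destruct (proj1 (is_series_Reals _ _) Hexp eps Heps) as [N HN].
  exists N. intros n Hn. specialize (HN n Hn). rewrite exp_tail_eq by exact Hy.
  unfold R_dist in *. rewrite Rminus_0_r, Rabs_minus_sym. exact HN.
Qed.

Lemma expser_tail_bound (c : nat -> R) (m : nat) (M K t : R) :
  0 <= M -> 0 <= K -> (forall k, (k <= m)%nat -> c k = 0) -> geom_bounded c M K ->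
  Rabs (expser c t) <= M * exp_tail m (K * Rabs t).
Proof.
  intros HM HK Hlow Hc.
  assert (Hy : 0 <= K * Rabs t) by (apply Rmult_le_pos; [exact HK | apply Rabs_pos]).
  assert (Hterm : forall n,
            Rabs (t ^ n / INR (fact n) * c n) <= M * exp_tail_term m (K * Rabs t) n).
  { intro n. unfold exp_tail_term. destruct (n <=? m)%nat eqn:E.
    - apply Nat.leb_le in E. rewrite Hlow by exact E. rewrite Rmult_0_r, Rabs_R0. lra.
    - unfold exp_term, Rdiv. rewrite !Rabs_mult, <- RPow_abs, Rpow_mult_distr.
      rewrite (Rabs_right (/ INR (fact n))) by (left; apply Rinv_0_lt_compat, fact_pos).
      pose proof (pow_le (Rabs t) n (Rabs_pos t)). pose proof (Rinv_0_lt_compat _ (fact_pos n)).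
      replace (M * (K ^ n * Rabs t ^ n * / INR (fact n)))
        with (Rabs t ^ n * / INR (fact n) * (M * K ^ n)) by ring.
      apply Rmult_le_compat_l; [apply Rmult_le_pos; lra | apply Hc]. }
  assert (Hmaj : ex_series (fun n => M * exp_tail_term m (K * Rabs t) n))
    by (apply (ex_series_scal_l M (exp_tail_term m (K * Rabs t))), exp_tail_summable; exact Hy).
  rewrite <- (is_series_unique _ _ (expser_is_series M K c t Hc)).
  eapply Rle_trans; [apply Series_Rabs |].
  - apply (@ex_series_le R_AbsRing R_CompleteNormedModule)
      with (b := fun n => M * exp_tail_term m (K * Rabs t) n); [| exact Hmaj].
    intro n. change (norm ?x) with (Rabs x). rewrite Rabs_Rabsolu. apply Hterm.
  - unfold exp_tail. rewrite <- Series_scal_l. apply Series_le; [| exact Hmaj].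
    intro n. split; [apply Rabs_pos | apply Hterm].
Qed.

(** * Nearest-neighbour operators on N_0 and their heat semigroups *)

(* A nearest-neighbour operator
     (L g)(x) = up(x) g(x+1) + down(x) g(x-1) + diag(x) g(x),
   where g(x-1) is read as g(0) at x = 0. *)
Record nn_op : Type := NNOp { up : nat -> R; down : nat -> R; diag : nat -> R }.

Definition apply_op (L : nn_op) (g : nat -> R) (x : nat) : R :=
  up L x * g (S x) + down L x * g (pred x) + diag L x * g x.

Definition op_pow (L : nn_op) (k : nat) (g : nat -> R) : nat -> R :=
  Nat.iter k (apply_op L) g.

Definition op_bounded (L : nn_op) (B : R) : Prop :=
  0 <= B /\ forall x, 0 <= up L x <= B /\ 0 <= down L x <= B /\ - B <= diag L x <= B.

Definition heat (L : nn_op) (g : nat -> R) (t : R) (x : nat) : R :=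
  expser (fun k => op_pow L k g x) t.

Lemma apply_op_ext (L : nn_op) (g1 g2 : nat -> R) (x : nat) :
  (forall y, g1 y = g2 y) -> apply_op L g1 x = apply_op L g2 x.
Proof. intro H. unfold apply_op. rewrite !H. reflexivity. Qed.

Lemma op_pow_ext (L : nn_op) (k : nat) (g1 g2 : nat -> R) (x : nat) :
  (forall y, g1 y = g2 y) -> op_pow L k g1 x = op_pow L k g2 x.
Proof.
  intro H. revert x; induction k as [| k IH]; intro x; [apply H |].
  apply apply_op_ext, IH.
Qed.

Lemma op_pow_lin (L : nn_op) (k : nat) (g1 g2 : nat -> R) (a b : R) (x : nat) :
  op_pow L k (fun y => a * g1 y + b * g2 y) x = a * op_pow L k g1 x + b * op_pow L k g2 x.
Proof.
  revert x; induction k as [| k IH]; intro x; [reflexivity |].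
  simpl. rewrite (apply_op_ext L _ (fun y => a * op_pow L k g1 y + b * op_pow L k g2 y))
    by exact IH.
  unfold apply_op. ring.
Qed.

Lemma op_pow_intertwine (L1 L2 : nn_op) (a b : R) :
  (forall h r, apply_op L2 (fun y => a * h y + b * h (S y)) r
               = a * apply_op L1 h r + b * apply_op L1 h (S r)) ->
  forall k h r, op_pow L2 k (fun y => a * h y + b * h (S y)) r
                = a * op_pow L1 k h r + b * op_pow L1 k h (S r).
Proof.
  intros Hint k h. induction k as [| k IH]; intro r; [reflexivity |].
  simpl. rewrite (apply_op_ext L2 _ (fun y => a * op_pow L1 k h y + b * op_pow L1 k h (S y)))
    by exact IH.
  apply Hint.
Qed.

Lemma geom_bounded_lin (c1 c2 : nat -> R) (a b M1 M2 K : R) :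
  geom_bounded c1 M1 K -> geom_bounded c2 M2 K ->
  geom_bounded (fun k => a * c1 k + b * c2 k) (Rabs a * M1 + Rabs b * M2) K.
Proof.
  intros H1 H2 k. eapply Rle_trans; [apply Rabs_triang |]. rewrite !Rabs_mult.
  pose proof (Rabs_pos a). pose proof (Rabs_pos b).
  pose proof (Rmult_le_compat_l _ _ _ (Rabs_pos a) (H1 k)).
  pose proof (Rmult_le_compat_l _ _ _ (Rabs_pos b) (H2 k)). nra.
Qed.

Section BoundedOperator.

Variables (L : nn_op) (B : R).
Hypothesis HL : op_bounded L B.

Lemma apply_op_bound (h : nat -> R) (M : R) (x : nat) :
  (forall y, Rabs (h y) <= M) -> Rabs (apply_op L h x) <= 3 * B * M.
Proof.
  intro HM. destruct HL as [HB Hc]. destruct (Hc x) as (Hu & Hd & Hg).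
  pose proof (HM (S x)) as Hup; pose proof (HM (pred x)) as Hdown; pose proof (HM x) as Hx.
  assert (HM0 : 0 <= M) by (eapply Rle_trans; [apply Rabs_pos | exact Hx]).
  assert (Hdiag : Rabs (diag L x) <= B) by (apply Rabs_le; lra).
  unfold apply_op. eapply Rle_trans; [apply Rabs_triang |].
  eapply Rle_trans; [apply Rplus_le_compat_r, Rabs_triang |]. rewrite !Rabs_mult.
  rewrite (Rabs_right (up L x)), (Rabs_right (down L x)) by lra.
  pose proof (Rmult_le_compat _ _ _ _ (Rabs_pos (diag L x)) (Rabs_pos (h x)) Hdiag Hx).
  pose proof (Rmult_le_compat _ _ _ _ (proj1 Hu) (Rabs_pos (h (S x))) (proj2 Hu) Hup).
  pose proof (Rmult_le_compat _ _ _ _ (proj1 Hd) (Rabs_pos (h (pred x))) (proj2 Hd) Hdown).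
  lra.
Qed.

Lemma op_pow_bounded (g : nat -> R) (M : R) (x : nat) :
  (forall y, Rabs (g y) <= M) -> geom_bounded (fun k => op_pow L k g x) M (3 * B).
Proof.
  intros HM k. revert x; induction k as [| k IH]; intro x.
  - rewrite Rmult_1_r. apply HM.
  - simpl op_pow. simpl pow.
    replace (M * (3 * B * (3 * B) ^ k)) with (3 * B * (M * (3 * B) ^ k)) by ring.
    apply apply_op_bound. exact IH.
Qed.

Lemma heat_lin (g1 g2 : nat -> R) (M1 M2 a b t : R) (x : nat) :
  (forall y, Rabs (g1 y) <= M1) -> (forall y, Rabs (g2 y) <= M2) ->
  heat L (fun y => a * g1 y + b * g2 y) t x = a * heat L g1 t x + b * heat L g2 t x.
Proof.
  intros H1 H2. unfold heat.
  rewrite <- (expser_lin _ _ a b M1 (3 * B) M2 (3 * B));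
    [| apply op_pow_bounded; assumption ..].
  apply expser_ext. intro k. apply op_pow_lin.
Qed.

Lemma heat_derive (g : nat -> R) (M t : R) (x : nat) :
  (forall y, Rabs (g y) <= M) ->
  is_derive (fun s => heat L g s x) t (apply_op L (fun y => heat L g t y) x).
Proof.
  intro HM. unfold heat.
  replace (apply_op L (fun y => expser (fun k => op_pow L k g y) t) x)
    with (expser (fun k => op_pow L (S k) g x) t).
  { apply (expser_derive M (3 * B)), op_pow_bounded, HM. }
  pose proof (op_pow_bounded g M (S x) HM) as Bup.
  pose proof (op_pow_bounded g M (pred x) HM) as Bdown.
  pose proof (op_pow_bounded g M x HM) as Bdiag.
  transitivity (expser (fun k => 1 * (up L x * op_pow L k g (S x)
                                      + down L x * op_pow L k g (pred x))
                                 + diag L x * op_pow L k g x) t).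
  { apply expser_ext. intro k. simpl. unfold apply_op. ring. }
  rewrite (expser_lin _ _ _ _ _ _ _ _ t (geom_bounded_lin _ _ _ _ _ _ _ Bup Bdown) Bdiag).
  rewrite (expser_lin _ _ _ _ _ _ _ _ t Bup Bdown). unfold apply_op. ring.
Qed.

End BoundedOperator.

Lemma heat_ext (L : nn_op) (g1 g2 : nat -> R) (t : R) (x : nat) :
  (forall y, g1 y = g2 y) -> heat L g1 t x = heat L g2 t x.
Proof. intro H. apply expser_ext. intro k. apply op_pow_ext, H. Qed.

Lemma heat_intertwine (L1 L2 : nn_op) (B1 a b M t : R) (h : nat -> R) (r : nat) :
  op_bounded L1 B1 -> (forall y, Rabs (h y) <= M) ->
  (forall h r, apply_op L2 (fun y => a * h y + b * h (S y)) r
               = a * apply_op L1 h r + b * apply_op L1 h (S r)) ->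
  heat L2 (fun y => a * h y + b * h (S y)) t r = a * heat L1 h t r + b * heat L1 h t (S r).
Proof.
  intros HL1 HM Hint. unfold heat.
  rewrite <- (expser_lin _ _ a b M (3 * B1) M (3 * B1));
    [| apply (op_pow_bounded L1 B1 HL1); exact HM ..].
  apply expser_ext. intro k. apply (op_pow_intertwine L1 L2 a b Hint).
Qed.

(** Positivity: writing L = L' - B with L' having nonnegative coefficients,
    e^{tL} = e^{-Bt} e^{tL'}, and e^{tL'} preserves nonnegativity termwise. *)

Definition shift_diag (L : nn_op) (B : R) : nn_op :=
  NNOp (up L) (down L) (fun x => diag L x + B).

Lemma apply_op_sum (L : nn_op) (w : nat -> R) (e : nat -> nat -> R) (n x : nat) :
  apply_op L (fun y => sum_f_R0 (fun k => w k * e k y) n) x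
  = sum_f_R0 (fun k => w k * apply_op L (e k) x) n.
Proof. induction n as [| n IH]; simpl; rewrite <- ?IH; unfold apply_op; ring. Qed.

Lemma apply_op_div (L : nn_op) (h : nat -> R) (c : R) (x : nat) :
  apply_op L (fun y => h y / c) x = apply_op L h x / c.
Proof. unfold apply_op, Rdiv. ring. Qed.

Lemma sum_weighted_split (u : nat -> R) (n : nat) :
  sum_f_R0 (fun k => (INR (S n) - INR k) * u k) n + sum_f_R0 (fun k => INR (S k) * u (S k)) n
  = INR (S n) * sum_f_R0 u (S n).
Proof.
  assert (E1 : sum_f_R0 (fun k => INR k * u k) (S n) = sum_f_R0 (fun k => INR (S k) * u (S k)) n).
  { rewrite decomp_sum by lia. simpl pred. simpl INR at 1. ring. }
  assert (E2 : sum_f_R0 (fun k => (INR (S n) - INR k) * u k) (S n)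
               = sum_f_R0 (fun k => (INR (S n) - INR k) * u k) n).
  { rewrite tech5. ring. }
  rewrite <- E1, <- E2, <- plus_sum, scal_sum. apply sum_eq. intros. ring.
Qed.

(* Taylor coefficients of e^{tL} are the Cauchy product of those of e^{-Bt}
   and of e^{tL'}: L^n/n! = sum_k (-B)^k/k! L'^(n-k)/(n-k)!. *)
Lemma op_pow_convolution (L : nn_op) (B : R) (g : nat -> R) (n : nat) :
  forall x, op_pow L n g x / INR (fact n)
  = sum_f_R0 (fun k => (- B) ^ k / INR (fact k)
                        * (op_pow (shift_diag L B) (n - k) g x / INR (fact (n - k)))) n.
Proof.
  set (L' := shift_diag L B).
  set (a := fun k => (- B) ^ k / INR (fact k)).
  set (E := fun j y => op_pow L' j g y / INR (fact j)).
  change (forall x, op_pow L n g x / INR (fact n) = sum_f_R0 (fun k => a k * E (n - k)%nat x) n).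
  assert (HE : forall j x, apply_op L' (E j) x = INR (S j) * E (S j) x).
  { intros j x. unfold E. rewrite apply_op_div, fact_simpl, mult_INR. simpl op_pow.
    field. split; [apply fact_neq0 | apply not_0_INR; lia]. }
  assert (Ha : forall k, - B * a k = INR (S k) * a (S k)).
  { intro k. unfold a. rewrite fact_simpl, mult_INR. simpl pow.
    field. split; [apply fact_neq0 | apply not_0_INR; lia]. }
  induction n as [| n IH]; intro x.
  { simpl. unfold a, E. simpl. field. }
  set (u := fun k => a k * E (S n - k)%nat x).
  assert (Hup : sum_f_R0 (fun k => a k * apply_op L' (fun y => E (n - k)%nat y) x) n
                = sum_f_R0 (fun k => (INR (S n) - INR k) * u k) n).
  { apply sum_eq. intros k Hk. unfold u. rewrite HE.
    replace (S n - k)%nat with (S (n - k)) by lia.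
    rewrite S_INR, minus_INR by exact Hk. rewrite S_INR. ring. }
  assert (Hdiag : - B * sum_f_R0 (fun k => a k * E (n - k)%nat x) n
                  = sum_f_R0 (fun k => INR (S k) * u (S k)) n).
  { rewrite scal_sum. apply sum_eq. intros k Hk. unfold u.
    replace (S n - S k)%nat with (n - k)%nat by lia. rewrite <- Rmult_assoc, <- Ha. ring. }
  replace (op_pow L (S n) g x / INR (fact (S n)))
    with ((apply_op L' (fun y => op_pow L n g y / INR (fact n)) x
           - B * (op_pow L n g x / INR (fact n))) / INR (S n)).
  2: { rewrite apply_op_div, fact_simpl, mult_INR. simpl op_pow.
       unfold L', apply_op. cbn [shift_diag up down diag].
       field. split; [apply fact_neq0 | apply not_0_INR; lia]. }
  rewrite (apply_op_ext L' _ _ x IH), apply_op_sum, IH, Hup.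
  apply (Rmult_eq_reg_l (INR (S n))); [| apply not_0_INR; lia].
  rewrite <- (sum_weighted_split u n), <- Hdiag. field. apply not_0_INR. lia.
Qed.

Lemma op_pow_nonneg (L : nn_op) (k : nat) (g : nat -> R) (x : nat) :
  (forall y, 0 <= up L y /\ 0 <= down L y /\ 0 <= diag L y) -> (forall y, 0 <= g y) ->
  0 <= op_pow L k g x.
Proof.
  intros HL Hg. revert x; induction k as [| k IH]; intro x; [apply Hg |].
  simpl. unfold apply_op. destruct (HL x) as (Hu & Hd & Hc).
  pose proof (Rmult_le_pos _ _ Hu (IH (S x))).
  pose proof (Rmult_le_pos _ _ Hd (IH (pred x))).
  pose proof (Rmult_le_pos _ _ Hc (IH x)). lra.
Qed.

Lemma heat_nonneg (L : nn_op) (B M t : R) (g : nat -> R) (x : nat) :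
  op_bounded L B -> (forall y, Rabs (g y) <= M) -> (forall y, 0 <= g y) -> 0 <= t ->
  0 <= heat L g t x.
Proof.
  intros HL HM Hg Ht. destruct HL as [HB Hc].
  set (a := fun k => (- B) ^ k / INR (fact k)).
  set (b := fun k => op_pow (shift_diag L B) k g x / INR (fact k)).
  assert (HL' : op_bounded (shift_diag L B) (2 * B)).
  { split; [lra |]. intro y. destruct (Hc y) as (Hu & Hd & Hdg). cbn. lra. }
  assert (Ha : geom_bounded (fun k => (- B) ^ k) 1 B).
  { intro k. rewrite <- RPow_abs, Rabs_Ropp, Rabs_right by lra. lra. }
  unfold heat, expser.
  rewrite (PSeries_ext _ (PS_mult a b)) by (intro n; apply op_pow_convolution).
  rewrite PSeries_mult;
    [| apply (expser_radius 1 B _ t Ha)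
     | apply (expser_radius M (3 * (2 * B)) _ t), (op_pow_bounded _ _ HL'), HM].
  apply Rmult_le_pos.
  - replace (PSeries a t) with (exp (- B * t)); [left; apply exp_pos |].
    rewrite exp_Reals. unfold PSeries. apply Series_ext. intro n. unfold a.
    change (scal ?u ?v) with (u * v). real_eq. rewrite Rpow_mult_distr.
    unfold Rdiv. ring.
  - apply (expser_nonneg M (3 * (2 * B))); [apply (op_pow_bounded _ _ HL'), HM | exact Ht |].
    intro k. apply op_pow_nonneg; [| exact Hg].
    intro y. destruct (Hc y) as (Hu & Hd & Hdg). cbn. lra.
Qed.

(** * The heat semigroup of G_{N_0} *)

Definition rate (q : R) (x : nat) : R := match x with O => 0 | S _ => 2 * q end.

Definition absorbed_lap (q : R) : nn_op :=
  NNOp (rate q) (rate q) (fun x => match x with O => 0 | S _ => - (4 * q) end).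

Lemma absorbed_lap_bounded (q : R) : 0 < q -> op_bounded (absorbed_lap q) (6 * q).
Proof. intro Hq. split; [lra |]. intros [| x]; cbn; lra. Qed.

Lemma q0_zero (q : R) (x y : nat) : x = 0%nat \/ (y <> S x /\ S y <> x) -> q0 q x y = 0.
Proof.
  intros [-> | [H1 H2]]; [reflexivity |]. unfold q0.
  replace (y =? S x)%nat with false by (symmetry; apply Nat.eqb_neq; exact H1).
  replace (S y =? x)%nat with false by (symmetry; apply Nat.eqb_neq; exact H2).
  destruct (0 <? x)%nat; reflexivity.
Qed.

Lemma q0_up (q : R) (x : nat) : (0 < x)%nat -> q0 q x (S x) = 2 * q.
Proof. intro Hx. unfold q0. apply Nat.ltb_lt in Hx. rewrite Hx, Nat.eqb_refl. reflexivity. Qed.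

Lemma q0_down (q : R) (x : nat) : q0 q (S x) x = 2 * q.
Proof. unfold q0. simpl. rewrite Nat.eqb_refl, Bool.orb_true_r. reflexivity. Qed.

Lemma edge_sum_eq (q : R) (g : nat -> R) (x : nat) :
  sum_f_R0 (fun y => q0 q x y * (g y - g x)) (S x) = apply_op (absorbed_lap q) g x.
Proof.
  destruct x as [| m].
  - simpl. rewrite !q0_zero by auto. unfold apply_op. cbn. ring.
  - rewrite !tech5, q0_up by lia. rewrite (q0_zero q (S m) (S m)) by (right; lia).
    unfold apply_op. cbn [absorbed_lap up down diag rate pred].
    destruct m as [| m].
    + simpl. rewrite q0_down. ring.
    + rewrite tech5, q0_down, (sum_eq _ (fun _ => 0)), sum_cte; [ring |].
      intros i Hi. rewrite q0_zero by (right; lia). ring.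
Qed.

Lemma LapS_eq (q : R) (N : nat) (g : nat -> R) (x : nat) :
  LapS q N g x = if inS N x then apply_op (absorbed_lap q) g x else 0.
Proof. unfold LapS. destruct (inS N x); [apply edge_sum_eq | reflexivity]. Qed.

Lemma LapS_pow_local (q : R) (N k : nat) (f : nat -> R) (j : nat) :
  (j + k <= N)%nat ->
  Nat.iter k (LapS q N) (restrict N f) j = op_pow (absorbed_lap q) k f j.
Proof.
  revert j; induction k as [| k IH]; intros j Hj.
  - simpl. unfold restrict, inS. replace (j <=? N)%nat with true; [reflexivity |].
    symmetry. apply Nat.leb_le. lia.
  - simpl. rewrite LapS_eq. unfold inS.
    replace (j <=? N)%nat with true by (symmetry; apply Nat.leb_le; lia).
    unfold apply_op. rewrite !IH by (simpl; lia). reflexivity.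
Qed.

Lemma LapS_pow_bounded (q : R) (N : nat) (f : nat -> R) (x : nat) :
  0 < q -> (forall y, Rabs (f y) <= 1) ->
  geom_bounded (fun k => Nat.iter k (LapS q N) (restrict N f) x) 1 (3 * (6 * q)).
Proof.
  intros Hq Hf k. revert x; induction k as [| k IH]; intro x.
  - simpl. unfold restrict. destruct (inS N x); [pose proof (Hf x); lra |]. rewrite Rabs_R0; lra.
  - simpl Nat.iter. rewrite LapS_eq. destruct (inS N x).
    + simpl pow. replace (1 * (3 * (6 * q) * (3 * (6 * q)) ^ k))
        with (3 * (6 * q) * (1 * (3 * (6 * q)) ^ k)) by ring.
      apply (apply_op_bound _ _ (absorbed_lap_bounded q Hq)). exact IH.
    + rewrite Rabs_R0. apply Rmult_le_pos; [lra | apply pow_le; lra].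
Qed.

Lemma Lim_eq (u : nat -> R) (l : R) : Un_cv u l -> Defs.Lim u = l.
Proof.
  intro H. unfold Defs.Lim.
  eapply UL_sequence; [| exact H].
  exact (epsilon_spec (inhabits 0) (fun l => Un_cv u l) (ex_intro _ l H)).
Qed.

Lemma PS_eq (q : R) (N : nat) (t : R) (f : nat -> R) (x : nat) :
  0 < q -> (forall y, Rabs (f y) <= 1) ->
  Defs.PS q N t f x = expser (fun k => Nat.iter k (LapS q N) (restrict N f) x) t.
Proof.
  intros Hq Hf. unfold Defs.PS. apply Lim_eq, is_series_Reals.
  apply (expser_is_series 1 (3 * (6 * q))), LapS_pow_bounded; assumption.
Qed.

(* The exhaustion limit defining P_t exists and equals the heat semigroup of
   the Laplacian of G_{N_0}: P^{S_N}_t f(x) and e^{tL} f(x) have the same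
   Taylor coefficients of order <= N - x. *)
Lemma Pt_eq (q t : R) (f : nat -> R) (x : nat) :
  0 < q -> (forall y, Rabs (f y) <= 1) -> Defs.Pt q t f x = heat (absorbed_lap q) f t x.
Proof.
  intros Hq Hf. unfold Defs.Pt. apply Lim_eq.
  set (K := 3 * (6 * q)).
  assert (HK : 0 <= K) by (unfold K; lra).
  assert (Hy : 0 <= K * Rabs t) by (apply Rmult_le_pos; [exact HK | apply Rabs_pos]).
  intros eps Heps.
  destruct (exp_tail_vanishes _ Hy (eps / 4)) as [N0 HN0]; [lra |].
  exists (N0 + x)%nat. intros N HN.
  rewrite PS_eq by assumption. unfold R_dist, heat.
  pose proof (LapS_pow_bounded q N f x Hq Hf) as Htrunc.
  pose proof (op_pow_bounded _ _ (absorbed_lap_bounded q Hq) f 1 x Hf) as Hfull.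
  replace (_ - _) with (expser (fun k => 1 * Nat.iter k (LapS q N) (restrict N f) x
                                       + (-1) * op_pow (absorbed_lap q) k f x) t)
    by (rewrite (expser_lin _ _ _ _ _ _ _ _ t Htrunc Hfull); ring).
  eapply Rle_lt_trans; [apply (expser_tail_bound _ (N - x) 2 K); [lra | exact HK | |] |].
  - intros k Hk. rewrite LapS_pow_local by lia. ring.
  - pose proof (geom_bounded_lin _ _ 1 (-1) _ _ _ Htrunc Hfull) as H.
    rewrite Rabs_R1, Rabs_m1 in H. replace 2 with (1 * 1 + 1 * 1) by ring. exact H.
  - specialize (HN0 (N - x)%nat ltac:(lia)). unfold R_dist in HN0.
    rewrite Rminus_0_r in HN0. pose proof (Rle_abs (exp_tail (N - x) (K * Rabs t))). lra.
Qed.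

(** * phi and its discrete derivatives as heat semigroups *)

Definition pos_ind (m : nat) : R := if (0 <? m)%nat then 1 else 0.
Definition delta0 (m : nat) : R := match m with O => 1 | S _ => 0 end.

Lemma pos_ind_bounds (y : nat) : 0 <= pos_ind y /\ Rabs (pos_ind y) <= 1.
Proof.
  unfold pos_ind. destruct (0 <? y)%nat; [rewrite Rabs_R1 | rewrite Rabs_R0]; lra.
Qed.

Lemma delta0_bounds (y : nat) : 0 <= delta0 y /\ Rabs (delta0 y) <= 1.
Proof. destruct y; cbn; [rewrite Rabs_R1 | rewrite Rabs_R0]; lra. Qed.

(* A nearest-neighbour operator moves mass by at most one site per power. *)
Lemma op_pow_delta0_support (L : nn_op) (k x : nat) : (k < x)%nat -> op_pow L k delta0 x = 0.
Proof.
  revert x; induction k as [| k IH]; intros x Hx.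
  - destruct x; [lia | reflexivity].
  - simpl. unfold apply_op. rewrite !IH by lia. ring.
Qed.

(* Auxiliary walks on N_0 (all with rate 2q to each neighbour away from 0):
   - reflected: from 0 jump to 1 at rate 2q;
   - dirichlet: from 0 jump to 1 at rate 2q and die at rate 2q;
   - folded:    |Z_t| for the walk Z on Z, i.e. from 0 jump to 1 at rate 4q;
   - folded_killed: as dirichlet, but dying at rate 4q at 0. *)
Definition reflected_lap (q : R) : nn_op :=
  NNOp (fun _ => 2 * q) (rate q) (fun x => match x with O => - (2 * q) | S _ => - (4 * q) end).
Definition dirichlet_lap (q : R) : nn_op :=
  NNOp (fun _ => 2 * q) (rate q) (fun _ => - (4 * q)).
Definition folded_lap (q : R) : nn_op :=
  NNOp (fun x => match x with O => 4 * q | S _ => 2 * q end) (rate q) (fun _ => - (4 * q)).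
Definition folded_killed_lap (q : R) : nn_op :=
  NNOp (fun _ => 2 * q) (rate q) (fun x => match x with O => - (6 * q) | S _ => - (4 * q) end).

Ltac solve_op_bounded := split; [lra |]; intros [| ?x]; cbn; lra.

Lemma reflected_lap_bounded (q : R) : 0 < q -> op_bounded (reflected_lap q) (6 * q).
Proof. intro. solve_op_bounded. Qed.
Lemma dirichlet_lap_bounded (q : R) : 0 < q -> op_bounded (dirichlet_lap q) (6 * q).
Proof. intro. solve_op_bounded. Qed.
Lemma folded_lap_bounded (q : R) : 0 < q -> op_bounded (folded_lap q) (6 * q).
Proof. intro. solve_op_bounded. Qed.
Lemma folded_killed_lap_bounded (q : R) : 0 < q -> op_bounded (folded_killed_lap q) (6 * q).
Proof. intro. solve_op_bounded. Qed.

Section Semigroups.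

Variable q : R.
Hypothesis Hq : 0 < q.

(* phi_t(r), and the probability of absorption at 0 before time t. *)
Definition surv (t : R) (r : nat) : R := heat (absorbed_lap q) pos_ind t r.
Definition absorb (t : R) (r : nat) : R := heat (absorbed_lap q) delta0 t r.
(* grad_t(r) = phi_t(r+1) - phi_t(r), and its own discrete derivatives. *)
Definition grad (t : R) (r : nat) : R := heat (reflected_lap q) delta0 t r.
Definition curv (t : R) (r : nat) : R := heat (dirichlet_lap q) delta0 t r.
Definition folded (t : R) (r : nat) : R := heat (folded_lap q) delta0 t r.
Definition folded_diff (t : R) (r : nat) : R := heat (folded_killed_lap q) delta0 t r.

Ltac check_intertwining := intros ?h [| [| ?x]]; unfold apply_op; cbn; ring.

Lemma grad_eq (t : R) (r : nat) : grad t r = surv t (S r) - surv t r.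
Proof.
  unfold grad, surv.
  rewrite (heat_ext _ delta0 (fun y => -1 * pos_ind y + 1 * pos_ind (S y)))
    by (intros [| y]; cbn; ring).
  rewrite (heat_intertwine (absorbed_lap q) _ (6 * q) _ _ 1);
    [ring | apply absorbed_lap_bounded, Hq | apply pos_ind_bounds | check_intertwining].
Qed.

Lemma grad_step (t : R) (r : nat) : grad t (S r) - grad t r = - curv t r.
Proof.
  unfold grad, curv.
  transitivity (heat (dirichlet_lap q) (fun y => -1 * delta0 y + 1 * delta0 (S y)) t r).
  - rewrite (heat_intertwine (reflected_lap q) _ (6 * q) _ _ 1);
      [ring | apply reflected_lap_bounded, Hq | apply delta0_bounds | check_intertwining].
  - rewrite (heat_ext _ _ (fun y => -1 * delta0 y + 0 * delta0 y)) by (intros [| y]; cbn; ring).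
    rewrite (heat_lin _ (6 * q) (dirichlet_lap_bounded q Hq) _ _ 1 1);
      [ring | apply delta0_bounds ..].
Qed.

Lemma grad_folded (t : R) (r : nat) : grad t r = folded t r + folded t (S r).
Proof.
  unfold grad, folded.
  rewrite (heat_ext _ delta0 (fun y => 1 * delta0 y + 1 * delta0 (S y)))
    by (intros [| y]; cbn; ring).
  rewrite (heat_intertwine (folded_lap q) _ (6 * q) _ _ 1);
    [ring | apply folded_lap_bounded, Hq | apply delta0_bounds | check_intertwining].
Qed.

Lemma folded_diff_eq (t : R) (r : nat) : folded_diff t r = folded t r - folded t (S r).
Proof.
  unfold folded_diff, folded.
  rewrite (heat_ext _ delta0 (fun y => 1 * delta0 y + (-1) * delta0 (S y)))
    by (intros [| y]; cbn; ring).
  rewrite (heat_intertwine (folded_lap q) _ (6 * q) _ _ 1);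
    [ring | apply folded_lap_bounded, Hq | apply delta0_bounds | check_intertwining].
Qed.

Lemma surv_at_0 (t : R) : surv t 0 = 0.
Proof.
  unfold surv, heat. apply expser_zero. intros [| k]; [reflexivity |].
  change (apply_op (absorbed_lap q) (op_pow (absorbed_lap q) k pos_ind) 0 = 0).
  unfold apply_op. cbn [absorbed_lap up down diag rate]. ring.
Qed.

(* Constants are stationary, so absorb = e^{tL}(1 - 1_{N_+}) = 1 - phi. *)
Lemma absorb_eq (t : R) (r : nat) : absorb t r = 1 - surv t r.
Proof.
  unfold absorb, surv.
  rewrite (heat_ext _ delta0 (fun y => 1 * (fun _ => 1) y + (-1) * pos_ind y))
    by (intros [| y]; cbn; ring).
  rewrite (heat_lin _ (6 * q) (absorbed_lap_bounded q Hq) _ _ 1 1);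
    [| intro; rewrite Rabs_R1; lra | apply pos_ind_bounds].
  assert (Hconst : forall k y, op_pow (absorbed_lap q) (S k) (fun _ => 1) y = 0).
  { induction k as [| k IH]; intro y.
    - change (apply_op (absorbed_lap q) (fun _ => 1) y = 0).
      unfold apply_op. destruct y; cbn; ring.
    - change (apply_op (absorbed_lap q) (op_pow (absorbed_lap q) (S k) (fun _ => 1)) y = 0).
      unfold apply_op. rewrite !IH. ring. }
  unfold heat. rewrite (expser_shift 1 (3 * (6 * q)));
    [| apply (op_pow_bounded _ _ (absorbed_lap_bounded q Hq)); intro; rewrite Rabs_R1; lra].
  rewrite expser_zero; [cbn; ring |]. intro k. rewrite Hconst. unfold Rdiv. ring.
Qed.

Lemma heat_delta0_nonneg (L : nn_op) (t : R) (r : nat) :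
  op_bounded L (6 * q) -> 0 <= t -> 0 <= heat L delta0 t r.
Proof.
  intros HL Ht. apply (heat_nonneg _ (6 * q) 1); [exact HL | apply delta0_bounds .. | exact Ht].
Qed.

Lemma grad_nonneg (t : R) (r : nat) : 0 <= t -> 0 <= grad t r.
Proof. apply heat_delta0_nonneg, reflected_lap_bounded, Hq. Qed.
Lemma curv_nonneg (t : R) (r : nat) : 0 <= t -> 0 <= curv t r.
Proof. apply heat_delta0_nonneg, dirichlet_lap_bounded, Hq. Qed.
Lemma folded_diff_nonneg (t : R) (r : nat) : 0 <= t -> 0 <= folded_diff t r.
Proof. apply heat_delta0_nonneg, folded_killed_lap_bounded, Hq. Qed.
Lemma absorb_nonneg (t : R) (r : nat) : 0 <= t -> 0 <= absorb t r.
Proof. apply heat_delta0_nonneg, absorbed_lap_bounded, Hq. Qed.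

Lemma surv_nonneg (t : R) (r : nat) : 0 <= t -> 0 <= surv t r.
Proof.
  apply heat_nonneg with (6 * q) 1; [apply absorbed_lap_bounded, Hq | apply pos_ind_bounds ..].
Qed.

Lemma surv_derive (t : R) (r : nat) :
  is_derive (fun s => surv s r) t (apply_op (absorbed_lap q) (surv t) r).
Proof.
  apply (heat_derive _ (6 * q) (absorbed_lap_bounded q Hq) _ 1). apply pos_ind_bounds.
Qed.

Lemma absorb_derive (t : R) (r : nat) :
  is_derive (fun s => absorb s r) t (apply_op (absorbed_lap q) (absorb t) r).
Proof.
  apply (heat_derive _ (6 * q) (absorbed_lap_bounded q Hq) _ 1). apply delta0_bounds.
Qed.

Lemma grad0_derive (t : R) :
  is_derive (fun s => grad s 0) t (2 * q * (grad t 1 - grad t 0)).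
Proof.
  eapply is_derive_eq;
    [apply (heat_derive _ (6 * q) (reflected_lap_bounded q Hq) _ 1), delta0_bounds |].
  unfold apply_op. cbn [reflected_lap up down diag rate pred]. unfold grad. real_eq. ring.
Qed.

Definition folded_coef (k i : nat) : R := op_pow (folded_lap q) k delta0 i.

Lemma folded_coef_S (k i : nat) :
  folded_coef (S k) i = apply_op (folded_lap q) (folded_coef k) i.
Proof. reflexivity. Qed.

(* Recurrence for the folded walk, the lattice analogue of the Bessel
   recurrence: (r+1) p_t(r+1) = 2qt (p_t(r) - p_t(r+2)).  It holds
   coefficientwise. *)
Lemma folded_recurrence_coef (k i : nat) :
  INR (S i) * folded_coef (S k) (S i)
  = 2 * q * INR (S k) * (folded_coef k i - folded_coef k (S (S i))).
Proof.
  revert i. induction k as [| k IH]; intro i.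
  - rewrite folded_coef_S. unfold apply_op, folded_coef. destruct i; cbn; ring.
  - rewrite folded_coef_S. unfold apply_op at 1. cbn [folded_lap up down diag rate pred].
    transitivity (2 * q * (INR (S (S i)) * folded_coef (S k) (S (S i))
                           - folded_coef (S k) (S (S i))
                           + INR i * folded_coef (S k) i + folded_coef (S k) i
                           - 2 * (INR (S i) * folded_coef (S k) (S i)))).
    { rewrite !S_INR. ring. }
    rewrite (IH (S i)), (IH i).
    destruct i as [| i]; [| rewrite (IH i)];
      rewrite !folded_coef_S; unfold apply_op; cbn [folded_lap up down diag rate pred];
      rewrite !S_INR; simpl INR; ring.
Qed.

Lemma folded_recurrence (t : R) (r : nat) :
  INR (S r) * folded t (S r) = 2 * q * t * (folded t r - folded t (S (S r))).
Proof.
  assert (Hcoef : forall i, geom_bounded (fun k => folded_coef k i) 1 (3 * (6 * q)))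
    by (intro i; apply (op_pow_bounded _ _ (folded_lap_bounded q Hq)), delta0_bounds).
  unfold folded, heat. rewrite (expser_shift 1 (3 * (6 * q))) by apply Hcoef.
  change (op_pow (folded_lap q) 0 delta0 (S r)) with 0.
  rewrite (expser_ext _ (fun k => (2 * q / INR (S r)) * folded_coef k r
                                 + (- (2 * q / INR (S r))) * folded_coef k (S (S r)))).
  - rewrite (expser_lin _ _ _ _ _ _ _ _ _ (Hcoef r) (Hcoef (S (S r)))). unfold folded_coef.
    field. apply not_0_INR. lia.
  - intro k. pose proof (folded_recurrence_coef k r) as Hrec. unfold folded_coef in *.
    apply (Rmult_eq_reg_l (INR (S r))); [| apply not_0_INR; lia].
    unfold Rdiv at 1. rewrite <- Rmult_assoc, Hrec. field. split; apply not_0_INR; lia.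
Qed.

End Semigroups.

Section PhiProperties.

Variable q : R.
Hypothesis Hq : 0 < q.

Lemma surv_mono (t : R) (x y : nat) : 0 <= t -> (x <= y)%nat -> surv q t x <= surv q t y.
Proof.
  intros Ht Hxy. induction Hxy as [| y _ IH]; [lra |].
  pose proof (grad_eq q Hq t y). pose proof (grad_nonneg q Hq t y Ht). lra.
Qed.

Lemma surv_second_diff (t : R) (r : nat) :
  surv q t (S (S r)) + surv q t r - 2 * surv q t (S r) = - curv q t r.
Proof.
  rewrite <- (grad_step q Hq), !(grad_eq q Hq). ring.
Qed.

Lemma surv_heat_equation (t : R) (r : nat) :
  is_derive (fun s => surv q s (S r)) t
    (2 * q * (surv q t (S (S r)) + surv q t r - 2 * surv q t (S r))).
Proof.
  eapply is_derive_eq; [apply (surv_derive q Hq) |].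
  unfold apply_op. cbn [absorbed_lap up down diag rate pred]. real_eq. ring.
Qed.

Lemma grad_le_grad0 (t : R) (i : nat) : 0 <= t -> grad q t i <= grad q t 0.
Proof.
  intro Ht. induction i as [| i IH]; [lra |].
  pose proof (grad_step q Hq t i). pose proof (curv_nonneg q Hq t i Ht). lra.
Qed.

Lemma surv_le_linear (t : R) (r : nat) : 0 <= t -> surv q t r <= INR r * grad q t 0.
Proof.
  intro Ht. induction r as [| r IH].
  - rewrite (surv_at_0 q). simpl. lra.
  - pose proof (grad_eq q Hq t r). pose proof (grad_le_grad0 t r Ht). rewrite S_INR. lra.
Qed.

End PhiProperties.

Lemma nondecreasing_of_derive (f f' : R -> R) (a b : R) : a <= b ->
  (forall x, a <= x <= b -> is_derive f x (f' x)) -> (forall x, a <= x <= b -> 0 <= f' x) ->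
  f a <= f b.
Proof.
  intros Hab Hd Hpos.
  destruct (MVT_gen f a b f') as [c [Hc Hmvt]]; rewrite ?Rmin_left, ?Rmax_right in * by lra.
  - intros x Hx. apply Hd. lra.
  - intros x Hx. apply continuity_pt_filterlim, (@ex_derive_continuous R_AbsRing R_NormedModule).
    exists (f' x). apply Hd. exact Hx.
  - pose proof (Rmult_le_pos _ _ (Hpos c Hc) (proj1 (Rminus_le_0 _ _) Hab)) as H. lra.
Qed.

Lemma le_of_vanishing_error (a b c : R) (e : nat -> R) :
  (forall n, a <= b + c * e n) -> Un_cv e 0 -> a <= b.
Proof.
  intros Hle He. apply is_lim_seq_Reals in He.
  apply (is_lim_seq_le (fun _ => a) (fun n => b + c * e n) a b Hle).
  - apply is_lim_seq_const.
  - assert (H : is_lim_seq (fun n => b + c * e n) (b + c * 0))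
      by (apply is_lim_seq_plus'; [apply is_lim_seq_const | exact (is_lim_seq_scal_l e c 0 He)]).
    rewrite Rmult_0_r, Rplus_0_r in H. exact H.
Qed.

Lemma le_1_of_linear_bound (Y v : R) : 0 < v -> (forall u, v < u -> Y * (u - v) <= u) -> Y <= 1.
Proof.
  intros Hv H. destruct (Rle_dec Y 1) as [| Hn]; [assumption | exfalso].
  set (u := Y * v / (Y - 1) + 1).
  assert (Hu : v < u).
  { unfold u. apply Rlt_le_trans with (Y * v / (Y - 1)); [| lra].
    apply Rmult_lt_reg_r with (Y - 1); [lra |]. unfold Rdiv.
    rewrite Rmult_assoc, Rinv_l by lra. nra. }
  specialize (H u Hu).
  assert ((Y - 1) * u = Y * v + (Y - 1)) by (unfold u; field; lra). nra.
Qed.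

Lemma sqrt_derive (x : R) : 0 < x -> is_derive sqrt x (/ (2 * sqrt x)).
Proof.
  intro Hx. eapply is_derive_eq; [apply (is_derive_sqrt (fun u => u)), Hx; apply is_derive_id |].
  change one with 1. real_eq. unfold Rdiv. ring.
Qed.

Lemma sq_sum_le (u : nat -> R) (n : nat) : (forall i, 0 <= u i <= 1) ->
  (sum_f_R0 u n) ^ 2 <= sum_f_R0 (fun i => (2 * INR i + 1) * u i) n.
Proof.
  intro Hu.
  assert (Hcount : forall m, sum_f_R0 u m <= INR (S m)).
  { induction m as [| m IH]; [simpl; destruct (Hu 0%nat); lra |].
    rewrite tech5, (S_INR (S m)). destruct (Hu (S m)). lra. }
  induction n as [| n IH]; [simpl; destruct (Hu 0%nat); nra |].
  rewrite !tech5. destruct (Hu (S n)) as [H0 H1].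
  pose proof (Hcount n) as Hs. pose proof (cond_pos_sum u n (fun i => proj1 (Hu i))).
  rewrite S_INR in *.
  assert (0 <= (INR n + 1 - sum_f_R0 u n) * u (S n)) by (apply Rmult_le_pos; lra).
  assert (0 <= u (S n) * (1 - u (S n))) by (apply Rmult_le_pos; lra).
  nra.
Qed.

(** * The bound grad_t(0) <= 1 / (2 sqrt(tq)) *)

Section Grad0Bound.

Variable q : R.
Hypothesis Hq : 0 < q.

Definition mass (n : nat) (t : R) : R := sum_f_R0 (fun i => absorb q t (S i)) n.
Definition moment (n : nat) (t : R) : R := sum_f_R0 (fun i => INR (S i) * absorb q t (S i)) n.

Lemma absorb_heat_equation (t : R) (r : nat) :
  is_derive (fun s => absorb q s (S r)) t (2 * q * (grad q t r - grad q t (S r))).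
Proof.
  eapply is_derive_eq; [apply (absorb_derive q Hq) |].
  unfold apply_op. cbn [absorbed_lap up down diag rate pred].
  rewrite !(absorb_eq q Hq), !(grad_eq q Hq). real_eq. ring.
Qed.

Lemma mass_derive (n : nat) (t : R) : is_derive (mass n) t (2 * q * (grad q t 0 - grad q t (S n))).
Proof.
  induction n as [| n IH]; [apply absorb_heat_equation |].
  eapply is_derive_eq; [apply (is_derive_plus (mass n) (fun s => absorb q s (S (S n)))) |];
    [exact IH | apply absorb_heat_equation |].
  change (plus ?a ?b) with (a + b). real_eq. ring.
Qed.

Lemma moment_derive (n : nat) (t : R) :
  is_derive (moment n) t (2 * q * (1 - INR (S n) * grad q t (S n) - absorb q t (S n))).
Proof.
  induction n as [| n IH].
  - eapply is_derive_eq;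
      [apply (is_derive_scal (fun s => absorb q s 1) t 1), absorb_heat_equation |].
    rewrite (absorb_eq q Hq), !(grad_eq q Hq), (surv_at_0 q). real_eq. simpl. ring.
  - eapply is_derive_eq;
      [apply (is_derive_plus (moment n) (fun s => INR (S (S n)) * absorb q s (S (S n)))) |];
      [exact IH | apply is_derive_scal, absorb_heat_equation |].
    change (plus ?a ?b) with (a + b).
    rewrite !(absorb_eq q Hq), !(grad_eq q Hq), !S_INR. real_eq. ring.
Qed.

(* The first moment grows at most at rate 2q (the flux into 0 is bounded by
   the total rate), so moment n t <= 2qt. *)
Lemma moment_le (n : nat) (t : R) : 0 <= t -> moment n t <= 2 * q * t.
Proof.
  intro Ht.
  assert (H0 : moment n 0 = 0).
  { unfold moment. rewrite (sum_eq _ (fun _ => 0)), sum_cte; [ring |].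
    intros i _. unfold absorb, heat. rewrite expser_at_0. simpl. ring. }
  assert (Hincr : 2 * q * 0 - moment n 0 <= 2 * q * t - moment n t).
  { apply (nondecreasing_of_derive (fun u => 2 * q * u - moment n u)
             (fun u => 2 * q * (INR (S n) * grad q u (S n) + absorb q u (S n)))); [exact Ht | |].
    - intros x _. eapply is_derive_eq.
      + apply (is_derive_minus (fun u => 2 * q * u) (moment n)); [| apply moment_derive].
        apply (is_derive_scal (fun u => u)), is_derive_id.
      + change (minus ?a ?b) with (a - b). change one with 1. real_eq. ring.
    - intros x Hx. pose proof (grad_nonneg q Hq x (S n) (proj1 Hx)).
      pose proof (absorb_nonneg q Hq x (S n) (proj1 Hx)). pose proof (pos_INR (S n)).
      apply Rmult_le_pos; [lra |]. apply Rplus_le_le_0_compat; [apply Rmult_le_pos |]; lra. }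
  lra.
Qed.

(* Since absorb_t takes values in [0, 1], mass^2 <= 2 moment <= 4qt. *)
Lemma mass_le (n : nat) (t : R) : 0 <= t -> mass n t <= sqrt (4 * q * t).
Proof.
  intro Ht.
  assert (Hunit : forall i, 0 <= absorb q t (S i) <= 1).
  { intro i. split; [apply (absorb_nonneg q Hq), Ht |].
    rewrite (absorb_eq q Hq). pose proof (surv_nonneg q Hq t (S i) Ht). lra. }
  assert (Hsq : (mass n t) ^ 2 <= 4 * q * t).
  { eapply Rle_trans; [apply (sq_sum_le (fun i => absorb q t (S i))), Hunit |].
    pose proof (moment_le n t Ht). unfold moment in *.
    assert (sum_f_R0 (fun i => (2 * INR i + 1) * absorb q t (S i)) n
            <= 2 * sum_f_R0 (fun i => INR (S i) * absorb q t (S i)) n).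
    { rewrite scal_sum. apply sum_Rle. intros i _. rewrite S_INR.
      destruct (Hunit i). nra. }
    lra. }
  assert (0 <= mass n t) by (apply cond_pos_sum; intro i; apply Hunit).
  rewrite <- (sqrt_pow2 (mass n t)) by assumption. apply sqrt_le_1_alt. exact Hsq.
Qed.

(* grad_t(n+1) has vanishing Taylor coefficients of order <= n, so it is
   bounded by a tail of the exponential series, uniformly for t in [0, s]. *)
Lemma grad_tail (n : nat) (t s : R) :
  0 <= t <= s -> grad q t (S n) <= exp_tail n (3 * (6 * q) * s).
Proof.
  intro Hts. unfold grad, heat. eapply Rle_trans; [apply Rle_abs |].
  eapply Rle_trans; [apply (expser_tail_bound _ n 1 (3 * (6 * q))); [lra | lra | |] |].
  - intros k Hk. apply op_pow_delta0_support. lia.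
  - apply (op_pow_bounded _ _ (reflected_lap_bounded q Hq)), delta0_bounds.
  - rewrite Rmult_1_l. apply exp_tail_mono. rewrite Rabs_right by lra.
    split; [apply Rmult_le_pos |]; nra.
Qed.

(* Via the folded walk: grad_t(0) + 4qt (grad_t(1) - grad_t(0)) = p_t(0) - p_t(1). *)
Lemma grad0_identity (t : R) :
  grad q t 0 + 4 * q * t * (grad q t 1 - grad q t 0) = folded_diff q t 0.
Proof.
  pose proof (folded_recurrence q Hq t 0) as Hrec. simpl INR in Hrec.
  rewrite (folded_diff_eq q Hq), !(grad_folded q Hq). lra.
Qed.

(* sqrt t * grad_t(0) is nondecreasing in t: its derivative is
   folded_diff_t(0) / (2 sqrt t) >= 0. *)
Lemma sqrt_grad0_mono (t s : R) : 0 < t <= s -> sqrt t * grad q t 0 <= sqrt s * grad q s 0.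
Proof.
  intro Hts.
  apply (nondecreasing_of_derive (fun u => sqrt u * grad q u 0)
           (fun u => folded_diff q u 0 / (2 * sqrt u))); [lra | |].
  - intros x Hx. assert (Hs : 0 < sqrt x) by (apply sqrt_lt_R0; lra).
    eapply is_derive_eq.
    + apply (is_derive_mult sqrt (fun u => grad q u 0));
        [apply sqrt_derive; lra | apply grad0_derive, Hq |].
      intros; apply Rmult_comm.
    + rewrite <- grad0_identity.
      change (plus ?a ?b) with (a + b). change (mult ?a ?b) with (a * b).
      real_eq. replace (4 * q * x) with (4 * q * (sqrt x * sqrt x)) by (rewrite sqrt_sqrt; lra).
      field. lra.
  - intros x Hx. apply Rmult_le_pos; [apply (folded_diff_nonneg q Hq); lra |].
    left. apply Rinv_0_lt_compat. pose proof (sqrt_lt_R0 x). lra.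
Qed.

(* Comparison on [t, s], with X = sqrt t * grad_t(0) and e the tail bound on
   grad_u(n+1): by sqrt_grad0_mono, u |-> mass n u - 4qX sqrt u + 2qeu is
   nondecreasing, and mass n s <= sqrt(4qs) by mass_le. *)
Lemma mass_comparison (n : nat) (t s : R) : 0 < t <= s ->
  4 * q * (sqrt t * grad q t 0) * (sqrt s - sqrt t)
  <= sqrt (4 * q * s) + 2 * q * (s - t) * exp_tail n (3 * (6 * q) * s).
Proof.
  intro Hts.
  set (X := sqrt t * grad q t 0). set (e := exp_tail n (3 * (6 * q) * s)).
  assert (Hincr : mass n t - 4 * q * X * sqrt t + 2 * q * e * t
                  <= mass n s - 4 * q * X * sqrt s + 2 * q * e * s).
  { apply (nondecreasing_of_derive (fun u => mass n u - 4 * q * X * sqrt u + 2 * q * e * u)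
       (fun u => 2 * q * (grad q u 0 - grad q u (S n)) - 4 * q * X * / (2 * sqrt u) + 2 * q * e));
      [lra | |].
    - intros x Hx. eapply is_derive_eq.
      + apply (is_derive_plus (fun u => mass n u - 4 * q * X * sqrt u) (fun u => 2 * q * e * u)).
        * apply (is_derive_minus (mass n) (fun u => 4 * q * X * sqrt u));
            [apply mass_derive | apply is_derive_scal, sqrt_derive; lra].
        * apply (is_derive_scal (fun u => u)), is_derive_id.
      + change (plus ?a ?b) with (a + b). change (minus ?a ?b) with (a - b). change one with 1.
        real_eq. ring.
    - intros x Hx. assert (Hs : 0 < sqrt x) by (apply sqrt_lt_R0; lra).
      pose proof (grad_tail n x s ltac:(lra)) as Htail. fold e in Htail.
      pose proof (sqrt_grad0_mono t x ltac:(lra)) as Hmono. fold X in Hmono.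
      assert (X * / (2 * sqrt x) <= grad q x 0 / 2).
      { apply Rmult_le_reg_l with (2 * sqrt x); [lra |].
        replace (2 * sqrt x * (X * / (2 * sqrt x))) with X by (field; lra). lra. }
      nra. }
  pose proof (mass_le n s ltac:(lra)).
  assert (0 <= mass n t).
  { apply cond_pos_sum. intro i. apply (absorb_nonneg q Hq). lra. }
  lra.
Qed.

Lemma grad0_le (t : R) : 0 < t -> grad q t 0 <= / (2 * sqrt (t * q)).
Proof.
  intro Ht. set (X := sqrt t * grad q t 0).
  assert (Hst : 0 < sqrt t) by (apply sqrt_lt_R0; lra).
  assert (Hsq : 0 < sqrt q) by (apply sqrt_lt_R0; lra).
  (* Letting n -> oo in mass_comparison. *)
  assert (Hcomp : forall s, t < s -> 4 * q * X * (sqrt s - sqrt t) <= sqrt (4 * q * s)).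
  { intros s Hs.
    apply (le_of_vanishing_error _ _ (2 * q * (s - t)) (fun n => exp_tail n (3 * (6 * q) * s))).
    - intro n. apply mass_comparison. lra.
    - apply exp_tail_vanishes. nra. }
  (* Letting s -> oo, with u = sqrt s. *)
  assert (H2 : 2 * sqrt q * X <= 1).
  { apply (le_1_of_linear_bound _ (sqrt t) Hst). intros u Hu.
    assert (Hu2 : t < u * u) by (rewrite <- (sqrt_sqrt t) by lra; nra).
    specialize (Hcomp (u * u) Hu2).
    rewrite sqrt_square in Hcomp by lra. rewrite !sqrt_mult in Hcomp by nra.
    replace (sqrt 4) with 2 in Hcomp by (rewrite <- (sqrt_square 2) by lra; f_equal; ring).
    rewrite sqrt_sqrt in Hcomp by lra.
    apply Rmult_le_reg_l with (2 * sqrt q); [lra |].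
    pose proof (sqrt_sqrt q ltac:(lra)). nra. }
  rewrite sqrt_mult by lra. unfold X in H2.
  apply Rmult_le_reg_l with (2 * sqrt q * sqrt t); [nra |].
  replace (2 * sqrt q * sqrt t * / (2 * (sqrt t * sqrt q))) with 1 by (field; lra). lra.
Qed.

End Grad0Bound.

Lemma phi_eq (q t : R) (r : nat) : 0 < q -> phi q t r = surv q t r.
Proof.
  intro Hq. unfold phi. rewrite Pt_eq by (apply Hq || intro; apply pos_ind_bounds). reflexivity.
Qed.

Theorem mainTheorem6 (qmin : R) (hq : 0 < qmin) :
  (forall (r : nat) (t : R), (1 <= r)%nat -> 0 < t ->
     derivable_pt_lim (fun s => phi qmin s r) t
       (2 * qmin * (phi qmin t (S r) + phi qmin t (r - 1) - 2 * phi qmin t r))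
     /\ 2 * qmin * (phi qmin t (S r) + phi qmin t (r - 1) - 2 * phi qmin t r) <= 0)
  /\ (forall (t : R) (x y : nat), 0 <= t -> (x <= y)%nat -> phi qmin t x <= phi qmin t y)
  /\ (forall (r : nat) (t : R), (1 <= r)%nat -> 0 < t ->
        phi qmin t r <= INR r / (2 * sqrt (t * qmin))).
Proof.
  split; [| split].
  - intros [| r] t Hr Ht; [lia |]. replace (S r - 1)%nat with r by lia.
    rewrite !phi_eq by exact hq. split.
    + apply is_derive_Reals, (is_derive_ext (fun s => surv qmin s (S r))).
      * intro s. symmetry. apply phi_eq, hq.
      * apply surv_heat_equation, hq.
    + rewrite (surv_second_diff qmin hq). pose proof (curv_nonneg qmin hq t r ltac:(lra)). nra.
  - intros t x y Ht Hxy. rewrite !phi_eq by exact hq. apply surv_mono; assumption.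
  - intros r t Hr Ht. rewrite phi_eq by exact hq.
    eapply Rle_trans; [apply (surv_le_linear qmin hq); lra |].
    apply Rmult_le_compat_l; [apply pos_INR | apply grad0_le; assumption].
Qed.
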